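(* Let $D$ be a BN distribution on $\{0,1\}^n$ with all conditional probabilities in $(0,1)$ and variable order $1,\dots,n$ a topological order, and let $f:\{0,1\}^n\to\mathbb{R}$ satisfy $\mathbb{E}_D[f(X)^2]\le 1$. Let $\theta>0$, $0\le k\le n$, and let $U$ be distributed as $(X_1,\dots,X_{n-k})$ for $X\sim D$. Then: (1) the number of $S\subseteq[n]$ with $|\hat f_S|\ge\theta$ is at most $1/\theta^2$; (2) for every $\alpha\in\{0,1\}^k$, $\mathbb{E}[g_\alpha(U)^2]=\sum_{\beta\in\{0,1\}^{n-k}}\hat f_{\beta\alpha}^2$; (3) if there is $\beta\in\{0,1\}^{n-k}$ with $|\hat f_{\beta\alpha}|\ge\theta$ then $\mathbb{E}[g_\alpha(U)^2]\ge\theta^2$; (4) the number of $\alpha\in\{0,1\}^k$ with $\mathbb{E}[g_\alpha(U)^2]\ge\theta^2$ is at most $1/\theta^2$.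
   Context: A Bayesian network (BN) on binary variables $X_1,\dots,X_n$ is a directed acyclic graph on $[n]$ with parent sets $\operatorname{pa}(v)$ and conditional distributions with $P(X_1,\dots,X_n)=\prod_v P(X_v\mid X_{\operatorname{pa}(v)})$. Let $\mu_{v,x_{\operatorname{pa}(v)}}=P(X_v=1\mid X_{\operatorname{pa}(v)}=x_{\operatorname{pa}(v)})$, $\sigma_{v,x_{\operatorname{pa}(v)}}=\sqrt{\mu_{v,x_{\operatorname{pa}(v)}}(1-\mu_{v,x_{\operatorname{pa}(v)}})}$, $\phi_v(x)=(x_v-\mu_{v,x_{\operatorname{pa}(v)}})/\sigma_{v,x_{\operatorname{pa}(v)}}$, $\phi_S=\prod_{v\in S}\phi_v$, and $\hat f_S=\mathbb{E}_D[f(X)\phi_S(X)]$. Sets $S\subseteq[n]$ are identified with strings $\gamma\in\{0,1\}^n$ via $\gamma_i=1\iff i\in S$. For $\beta\in\{0,1\}^{n-k}$, $\alpha\in\{0,1\}^k$, $\beta\alpha$ is their concatenation ($\beta$ in coordinates $1,\dots,n-k$), $0^m$ the zero string of length $m$, and $g_\alpha(u)=\sum_{\beta\in\{0,1\}^{n-k}}\hat f_{\beta\alpha}\,\phi_{\beta0^k}(u0^k)$ for $u\in\{0,1\}^{n-k}$. *)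

(* Binary Bayesian networks on variables 'I_n (0-based:
   variable i of the paper is index i-1), assignments x : {ffun 'I_n -> bool}. *)
From mathcomp Require Import all_boot all_order all_algebra.
Set Implicit Arguments. Unset Strict Implicit. Unset Printing Implicit Defensive.
Import Order.TTheory GRing.Theory Num.Theory.
Local Open Scope ring_scope.

Section BN.
Variables (R : rcfType) (n : nat).
(* mu v x = P(X_v = 1 | X_pa(v) = x_pa(v)); locality in pa(v) is a hypothesis
   of the main theorem. *)
Variable mu : 'I_n -> {ffun 'I_n -> bool} -> R.

Definition bn_prob (x : {ffun 'I_n -> bool}) : R :=
  \prod_(v < n) (if x v then mu v x else 1 - mu v x).

Definition bn_exp (h : {ffun 'I_n -> bool} -> R) : R :=
  \sum_(x : {ffun 'I_n -> bool}) bn_prob x * h x.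

Definition bn_sigma (v : 'I_n) (x : {ffun 'I_n -> bool}) : R :=
  Num.sqrt (mu v x * (1 - mu v x)).

Definition bn_phi (v : 'I_n) (x : {ffun 'I_n -> bool}) : R :=
  ((x v)%:R - mu v x) / bn_sigma v x.

Definition bn_phiS (S : {set 'I_n}) (x : {ffun 'I_n -> bool}) : R :=
  \prod_(v in S) bn_phi v x.

Definition fourier (f : {ffun 'I_n -> bool} -> R) (S : {set 'I_n}) : R :=
  bn_exp (fun x => f x * bn_phiS S x).
End BN.

Definition setof (n : nat) (g : {ffun 'I_n -> bool}) : {set 'I_n} := [set i | g i].

(* concatenation beta alpha : beta in coordinates 0..n-k-1, alpha in n-k..n-1 *)
Definition catb (n k : nat) (b : {ffun 'I_(n - k) -> bool}) (a : {ffun 'I_k -> bool})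
  : {ffun 'I_n -> bool} :=
  [ffun i : 'I_n => nth false (codom b ++ codom a) i].
Arguments catb n k b a : clear implicits.

Definition prefb (n k : nat) (x : {ffun 'I_n -> bool}) : {ffun 'I_(n - k) -> bool} :=
  [ffun j : 'I_(n - k) => nth false (codom x) j].
Arguments prefb n k x : clear implicits.

Definition galpha (R : rcfType) (n k : nat) (mu : 'I_n -> {ffun 'I_n -> bool} -> R)
  (f : {ffun 'I_n -> bool} -> R) (a : {ffun 'I_k -> bool}) (u : {ffun 'I_(n - k) -> bool}) : R :=
  \sum_(b : {ffun 'I_(n - k) -> bool})
     fourier mu f (setof (catb n k b a)) *
     bn_phiS mu (setof (catb n k b [ffun=> false])) (catb n k u [ffun=> false]).
Arguments galpha R n k mu f a u : clear implicits.

Definition galpha_sqnorm (R : rcfType) (n k : nat) (mu : 'I_n -> {ffun 'I_n -> bool} -> R)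
  (f : {ffun 'I_n -> bool} -> R) (a : {ffun 'I_k -> bool}) : R :=
  bn_exp mu (fun x => (galpha R n k mu f a (prefb n k x)) ^+ 2).
Arguments galpha_sqnorm R n k mu f a : clear implicits.

From mathcomp Require Import all_boot all_order all_algebra.
From mathcomp Require Import ring lra zify.
Set Implicit Arguments. Unset Strict Implicit. Unset Printing Implicit Defensive.
Import Order.TTheory GRing.Theory Num.Theory.
Local Open Scope ring_scope.

(* The functions [phi_S] are orthonormal in L^2(D).  Truncate the network at [m]
   (later variables become fair coins) and integrate out [X_m] with its predecessors
   fixed: [phi_m] has conditional mean 0 and variance 1, while every other factor of
   [phi_S phi_T] with [S, T] below [m + 1] depends only on earlier variables, so
   induction on [m] gives E[phi_S phi_T] = [S = T].  Bessel's inequality then bounds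
   the sum of all squared coefficients [f_S^2] by E[f^2] <= 1, and (1), (4) follow by
   counting.  Since [phi_(beta 0^k)] depends only on the first [n - k] variables,
   [g_alpha(U)] is the orthonormal combination sum_beta f_(beta alpha) phi_(beta 0^k)(X),
   which gives (2) and hence (3). *)

Section Strings.
Variables n k : nat.
Implicit Types (b : {ffun 'I_(n - k) -> bool}) (a : {ffun 'I_k -> bool}) (x : {ffun 'I_n -> bool}).

Lemma setof_inj : injective (@setof n).
Proof.
move=> g g' eq_gg'; apply/ffunP => i.
by have := congr1 (fun A : {set 'I_n} => i \in A) eq_gg'; rewrite !inE.
Qed.

Lemma catb_lo b a (i : 'I_n) (lt_i : (i < n - k)%N) : catb n k b a i = b (Ordinal lt_i).
Proof.
rewrite ffunE nth_cat size_codom card_ord lt_i codom_ffun.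
exact: (nth_fgraph_ord false (Ordinal lt_i) b).
Qed.

Lemma catb_ge b a (i : 'I_n) : (n - k <= i)%N ->
  catb n k b a i = nth false (codom a) (i - (n - k)).
Proof. by move=> le_i; rewrite ffunE nth_cat size_codom card_ord ltnNge le_i. Qed.

Lemma prefbE x (j : 'I_(n - k)) : prefb n k x j = x (widen_ord (leq_subr k n) j).
Proof.
rewrite ffunE codom_ffun.
exact: (nth_fgraph_ord false (widen_ord (leq_subr k n) j) x).
Qed.

Lemma catb_prefb_lo x a (i : 'I_n) : (i < n - k)%N -> catb n k (prefb n k x) a i = x i.
Proof. by move=> lt_i; rewrite catb_lo prefbE; congr (x _); apply: val_inj. Qed.

Lemma mem_setof_catb0 b (v : 'I_n) :
  v \in setof (catb n k b [ffun=> false]) -> (v < n - k)%N.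
Proof.
rewrite inE; have [//|le_v] := ltnP v (n - k); rewrite catb_ge //.
have [lt|le] := ltnP (v - (n - k)) k; last by rewrite nth_default // size_codom card_ord.
by rewrite codom_ffun (nth_fgraph_ord false (Ordinal lt)) ffunE.
Qed.

Hypothesis le_kn : (k <= n)%N.

Lemma catb_inj b a b' a' : catb n k b a = catb n k b' a' -> b = b' /\ a = a'.
Proof.
move=> eq_cat; split; apply/ffunP => j.
  have lt_j : (j < n)%N by apply: leq_trans (ltn_ord j) (leq_subr k n).
  have := congr1 (fun g : {ffun 'I_n -> bool} => g (Ordinal lt_j)) eq_cat.
  have lo : (Ordinal lt_j < n - k)%N := ltn_ord j.
  by rewrite !(catb_lo _ _ lo); have -> : Ordinal lo = j by apply: val_inj.
have lt_j : (n - k + j < n)%N by have := ltn_ord j; lia.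
have := congr1 (fun g : {ffun 'I_n -> bool} => g (Ordinal lt_j)) eq_cat.
rewrite !catb_ge ?leq_addr //= addKn.
by rewrite !codom_ffun !(nth_fgraph_ord false j).
Qed.

End Strings.

Section Expectation.
Variables (R : rcfType) (n : nat) (mu : 'I_n -> {ffun 'I_n -> bool} -> R).
Implicit Types (h : {ffun 'I_n -> bool} -> R).

Lemma eq_bn_exp h1 h2 : (forall x, h1 x = h2 x) -> bn_exp mu h1 = bn_exp mu h2.
Proof. by move=> eq_h; apply: eq_bigr => x _; rewrite eq_h. Qed.

Lemma bn_expD h1 h2 : bn_exp mu (fun x => h1 x + h2 x) = bn_exp mu h1 + bn_exp mu h2.
Proof. by rewrite /bn_exp -big_split; apply: eq_bigr => x _; rewrite mulrDr. Qed.

Lemma bn_expB h1 h2 : bn_exp mu (fun x => h1 x - h2 x) = bn_exp mu h1 - bn_exp mu h2.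
Proof. by rewrite /bn_exp -sumrB; apply: eq_bigr => x _; rewrite mulrBr. Qed.

Lemma bn_expZ c h : bn_exp mu (fun x => c * h x) = c * bn_exp mu h.
Proof. by rewrite /bn_exp mulr_sumr; apply: eq_bigr => x _; rewrite mulrCA. Qed.

Lemma bn_exp_sum (I : finType) (F : I -> {ffun 'I_n -> bool} -> R) :
  bn_exp mu (fun x => \sum_i F i x) = \sum_i bn_exp mu (F i).
Proof. by rewrite /bn_exp exchange_big; apply: eq_bigr => x _; rewrite mulr_sumr. Qed.

Hypothesis bn_prob_ge0 : forall x, 0 <= bn_prob mu x.

Lemma bn_exp_ge0 h : (forall x, 0 <= h x) -> 0 <= bn_exp mu h.
Proof. by move=> h_ge0; apply: sumr_ge0 => x _; rewrite mulr_ge0. Qed.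

End Expectation.

Section Bessel.
Variables (R : rcfType) (n : nat) (mu : 'I_n -> {ffun 'I_n -> bool} -> R).
Variables (I : finType) (e : I -> {ffun 'I_n -> bool} -> R).
Hypothesis e_orthonormal : forall i j, bn_exp mu (fun x => e i x * e j x) = (i == j)%:R.

Lemma bn_exp_sqr_lincomb (c : I -> R) :
  bn_exp mu (fun x => (\sum_i c i * e i x) ^+ 2) = \sum_i c i ^+ 2.
Proof.
under eq_bn_exp => x do rewrite expr2 mulr_suml; rewrite bn_exp_sum.
apply: eq_bigr => i _; under eq_bn_exp => x do rewrite mulr_sumr; rewrite bn_exp_sum.
rewrite (bigD1 i) //= big1 => [|j ne_ji]; under eq_bn_exp => x do rewrite mulrACA.
  by rewrite bn_expZ e_orthonormal eqxx mulr1 addr0 expr2.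
by rewrite bn_expZ e_orthonormal eq_sym (negbTE ne_ji) mulr0.
Qed.

Hypothesis bn_prob_ge0 : forall x, 0 <= bn_prob mu x.

Lemma bessel_inequality (f : {ffun 'I_n -> bool} -> R) :
  \sum_i bn_exp mu (fun x => f x * e i x) ^+ 2 <= bn_exp mu (fun x => f x ^+ 2).
Proof.
set c := fun i => bn_exp mu (fun x => f x * e i x).
pose g x := \sum_i c i * e i x.
have fg : bn_exp mu (fun x => f x * g x) = \sum_i c i ^+ 2.
  under eq_bn_exp => x do rewrite mulr_sumr; rewrite bn_exp_sum.
  by apply: eq_bigr => i _; under eq_bn_exp => x do rewrite mulrCA; rewrite bn_expZ expr2.
have : 0 <= bn_exp mu (fun x => (f x - g x) ^+ 2).
  by apply: bn_exp_ge0 => // x; apply: sqr_ge0.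
under eq_bn_exp => x do rewrite sqrrB -mulr_natl.
by rewrite bn_expD bn_expB bn_expZ fg bn_exp_sqr_lincomb; lra.
Qed.

End Bessel.

Lemma eqset_setD1 (T : finType) (m : T) (A B : {set T}) :
  (A == B) = ((m \in A) == (m \in B)) && (A :\ m == B :\ m).
Proof.
apply/eqP/andP => [-> | [/eqP eq_m /eqP eq_D]]; first by rewrite !eqxx.
apply/setP => v; have [-> //|ne_vm] := eqVneq v m.
by move/setP: eq_D => /(_ v); rewrite !inE ne_vm.
Qed.

Section Network.
Variables (R : rcfType) (n : nat).
Implicit Types (mu : 'I_n -> {ffun 'I_n -> bool} -> R) (x : {ffun 'I_n -> bool}).

Definition bn_cond mu (v : 'I_n) x : R := if x v then mu v x else 1 - mu v x.

Lemma bn_probE mu x : bn_prob mu x = \prod_v bn_cond mu v x.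
Proof. by []. Qed.

Definition trunc_mu mu (m : nat) (v : 'I_n) x : R := if (v < m)%N then mu v x else 2^-1.

Definition flip (m : 'I_n) x : {ffun 'I_n -> bool} :=
  [ffun i => if i == m then ~~ x i else x i].

Lemma flipK m : involutive (flip m).
Proof. by move=> x; apply/ffunP => i; rewrite !ffunE; case: eqP => [->|]; rewrite ?negbK. Qed.

Lemma flip_neq m x i : i != m -> flip m x i = x i.
Proof. by rewrite ffunE => /negbTE ->. Qed.

Lemma flip_self m x : flip m x m = ~~ x m.
Proof. by rewrite ffunE eqxx. Qed.

Lemma bn_cond_trunc_ge mu m (v : 'I_n) x : (m <= v)%N -> bn_cond (trunc_mu mu m) v x = 2^-1.
Proof.
rewrite /bn_cond /trunc_mu ltnNge => ->; case: (x v) => //.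
by rewrite {1}(splitr 1) mul1r addrK.
Qed.

Lemma bn_exp_trunc0 mu : bn_exp (trunc_mu mu 0) (fun _ => 1) = 1.
Proof.
have unif x : bn_prob (trunc_mu mu 0) x = 2^-1 ^+ n.
  rewrite /bn_prob (eq_bigr (fun=> 2^-1)) ?prodr_const ?card_ord // => v _.
  exact: bn_cond_trunc_ge.
rewrite /bn_exp; under eq_bigr => x _ do rewrite unif mulr1.
rewrite sumr_const card_ffun card_bool card_ord -(mulr_natr _ (2 ^ n)) natrX -exprMn.
by rewrite mulVf ?expr1n ?pnatr_eq0.
Qed.

Lemma bn_exp_trunc_n mu h : bn_exp (trunc_mu mu n) h = bn_exp mu h.
Proof.
by apply: eq_bigr => x _; congr (_ * _); apply: eq_bigr => v _; rewrite /trunc_mu ltn_ord.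
Qed.

Lemma bn_phiS_split mu m S x :
  bn_phiS mu S x = (if m \in S then bn_phi mu m x else 1) * bn_phiS mu (S :\ m) x.
Proof.
case: ifP => [mS|mNS]; first by rewrite /bn_phiS (big_setD1 m).
rewrite mul1r; congr (bn_phiS _ _ _); apply/setP => v; rewrite !inE.
by case: eqP => // ->; rewrite mNS.
Qed.

End Network.

Section BayesNet.
Variables (R : rcfType) (n : nat) (mu : 'I_n -> {ffun 'I_n -> bool} -> R).
Implicit Types (x y : {ffun 'I_n -> bool}) (S T : {set 'I_n}).
Hypothesis mu_causal : forall (v : 'I_n) x y,
  (forall u : 'I_n, (u < v)%N -> x u = y u) -> mu v x = mu v y.
Hypothesis mu01 : forall v x, 0 < mu v x < 1.

Lemma bn_prob_ge0 x : 0 <= bn_prob mu x.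
Proof.
apply: prodr_ge0 => v _; have /andP [mu_gt0 mu_lt1] := mu01 v x.
by case: (x v); rewrite ?subr_ge0 ltW.
Qed.

Lemma mu_flip (m v : 'I_n) x : (v <= m)%N -> mu v (flip m x) = mu v x.
Proof.
move=> le_vm; apply: mu_causal => u lt_uv; apply: flip_neq.
by rewrite neq_ltn (leq_trans lt_uv le_vm).
Qed.

Lemma bn_phiS_prefix (m : nat) S x y :
  (forall v, v \in S -> (v < m)%N) -> (forall u : 'I_n, (u < m)%N -> x u = y u) ->
  bn_phiS mu S x = bn_phiS mu S y.
Proof.
move=> S_lt eq_xy; apply: eq_bigr => v /S_lt lt_vm.
rewrite /bn_phi /bn_sigma eq_xy // (@mu_causal v x y) // => u lt_uv.
exact/eq_xy/(ltn_trans lt_uv).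
Qed.

Lemma bn_phiS_flip (m : 'I_n) S x :
  (forall v, v \in S -> (v < m)%N) -> bn_phiS mu S (flip m x) = bn_phiS mu S x.
Proof.
by move=> S_lt; apply: bn_phiS_prefix S_lt _ => u lt_um; rewrite flip_neq // neq_ltn lt_um.
Qed.

Lemma bn_cond_flip_sum (m : 'I_n) x : bn_cond mu m x + bn_cond mu m (flip m x) = 1.
Proof. by rewrite /bn_cond flip_self mu_flip //; case: (x m); rewrite /= ?subrKC ?addrNK. Qed.

(* [x] and [flip m x] are the two values of [X_m] with [X_1, ..., X_(m-1)] fixed:
   [phi_m] has conditional mean 0 and conditional variance 1. *)
Lemma bn_phi_flip_mean (m : 'I_n) x :
  bn_cond mu m x * bn_phi mu m x + bn_cond mu m (flip m x) * bn_phi mu m (flip m x) = 0.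
Proof. by rewrite /bn_cond /bn_phi /bn_sigma flip_self !mu_flip //; case: (x m) => /=; ring. Qed.

Lemma bn_phi_flip_var (m : 'I_n) x :
  bn_cond mu m x * bn_phi mu m x ^+ 2 + bn_cond mu m (flip m x) * bn_phi mu m (flip m x) ^+ 2 = 1.
Proof.
have /andP [mu_gt0 mu_lt1] := mu01 m x.
have mu'_gt0 : 0 < 1 - mu m x by rewrite subr_gt0.
rewrite /bn_cond /bn_phi /bn_sigma flip_self !mu_flip // !expr_div_n.
rewrite sqr_sqrtr ?mulr_ge0 ?ltW //.
by case: (x m) => /=; field; rewrite !gt_eqF.
Qed.

Lemma bn_prob_trunc_flip (m : 'I_n) x :
  bn_prob (trunc_mu mu m) (flip m x) = bn_prob (trunc_mu mu m) x.
Proof.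
rewrite !bn_probE; apply: eq_bigr => v _.
have [lt_vm|le_mv] := ltnP v m; last by rewrite !bn_cond_trunc_ge.
have ne_vm : v != m by rewrite neq_ltn lt_vm.
by rewrite /bn_cond /trunc_mu lt_vm flip_neq // mu_flip // ltnW.
Qed.

Lemma bn_prob_trunc_succ (m : 'I_n) x :
  bn_prob (trunc_mu mu m.+1) x = 2 * bn_cond mu m x * bn_prob (trunc_mu mu m) x.
Proof.
rewrite !bn_probE (bigD1 m) // [in RHS](bigD1 m) //= [in RHS]bn_cond_trunc_ge //.
rewrite mulrACA divff ?pnatr_eq0 // mul1r {1}/bn_cond /trunc_mu ltnSn.
congr (_ * _); apply: eq_bigr => v ne_vm.
by rewrite /bn_cond /trunc_mu ltnS leq_eqVlt val_eqE (negbTE ne_vm).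
Qed.

Lemma bn_exp_trunc_succ (m : 'I_n) h :
  bn_exp (trunc_mu mu m.+1) h =
  bn_exp (trunc_mu mu m) (fun x => bn_cond mu m x * h x + bn_cond mu m (flip m x) * h (flip m x)).
Proof.
rewrite /bn_exp; under [RHS]eq_bigr => x _ do rewrite mulrDr; rewrite big_split /=.
rewrite [X in _ = _ + X](reindex_inj (can_inj (flipK m))) /=.
under [X in _ = _ + X]eq_bigr => x _ do rewrite flipK bn_prob_trunc_flip.
rewrite -big_split /=; apply: eq_bigr => x _; rewrite bn_prob_trunc_succ; ring.
Qed.

Lemma bn_phi_flip_moment (m : 'I_n) (a b : bool) x :
  bn_cond mu m x * ((if a then bn_phi mu m x else 1) * (if b then bn_phi mu m x else 1))
  + bn_cond mu m (flip m x)
    * ((if a then bn_phi mu m (flip m x) else 1) * (if b then bn_phi mu m (flip m x) else 1))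
  = (a == b)%:R.
Proof.
case: a; case: b; rewrite /= ?mulr1 ?mul1r -?expr2.
- exact: bn_phi_flip_var.
- exact: bn_phi_flip_mean.
- exact: bn_phi_flip_mean.
- exact: bn_cond_flip_sum.
Qed.

Lemma bn_phiS_orthonormal_trunc (m : nat) S T : (m <= n)%N ->
  (forall v, v \in S -> (v < m)%N) -> (forall v, v \in T -> (v < m)%N) ->
  bn_exp (trunc_mu mu m) (fun x => bn_phiS mu S x * bn_phiS mu T x) = (S == T)%:R.
Proof.
elim: m S T => [|m IH] S T le_mn S_lt T_lt.
  have empty (U : {set 'I_n}) : (forall v, v \in U -> (v < 0)%N) -> U = set0.
    by move=> U_lt; apply/setP => v; rewrite inE; apply/negbTE/negP => /U_lt.
  rewrite (empty S) // (empty T) // eqxx -(bn_exp_trunc0 mu).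
  by apply: eq_bn_exp => x; rewrite /bn_phiS big_set0 mulr1.
pose mo := Ordinal le_mn.
have D_lt (U : {set 'I_n}) :
    (forall v, v \in U -> (v < mo.+1)%N) -> forall v, v \in U :\ mo -> (v < mo)%N.
  move=> U_lt v; rewrite !inE => /andP [ne_vm /U_lt].
  by rewrite ltnS leq_eqVlt val_eqE (negbTE ne_vm).
rewrite (_ : m.+1 = mo.+1) // bn_exp_trunc_succ (eqset_setD1 mo).
transitivity (bn_exp (trunc_mu mu mo) (fun x => ((mo \in S) == (mo \in T))%:R
                 * (bn_phiS mu (S :\ mo) x * bn_phiS mu (T :\ mo) x))).
  apply: eq_bn_exp => x; rewrite -(bn_phi_flip_moment mo (mo \in S) (mo \in T) x).
  rewrite !(bn_phiS_split _ mo S) !(bn_phiS_split _ mo T).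
  rewrite (bn_phiS_flip x (D_lt _ S_lt)) (bn_phiS_flip x (D_lt _ T_lt)).
  by case: (mo \in S); case: (mo \in T); ring.
rewrite (bn_expZ _ _ (fun x => bn_phiS mu (S :\ mo) x * bn_phiS mu (T :\ mo) x)).
rewrite IH; [|exact: ltnW|exact: D_lt|exact: D_lt].
by case: (_ == _); rewrite ?mul1r ?mul0r.
Qed.

Lemma bn_phiS_orthonormal S T :
  bn_exp mu (fun x => bn_phiS mu S x * bn_phiS mu T x) = (S == T)%:R.
Proof. by rewrite -bn_exp_trunc_n bn_phiS_orthonormal_trunc // => v _; apply: ltn_ord. Qed.

Lemma galpha_sqnormE (k : nat) (f : {ffun 'I_n -> bool} -> R) (a : {ffun 'I_k -> bool}) :
  (k <= n)%N ->
  galpha_sqnorm R n k mu f a =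
  \sum_(b : {ffun 'I_(n - k) -> bool}) fourier mu f (setof (catb n k b a)) ^+ 2.
Proof.
move=> le_kn; rewrite /galpha_sqnorm /galpha.
under eq_bn_exp => x do under eq_bigr => b _ do
  rewrite (bn_phiS_prefix (@mem_setof_catb0 n k b) (@catb_prefb_lo n k x [ffun=> false])).
have catb0_inj : injective (fun b => setof (catb n k b [ffun=> false])).
  by move=> b b' /setof_inj /(catb_inj le_kn) [].
by apply: bn_exp_sqr_lincomb => b b'; rewrite bn_phiS_orthonormal (inj_eq catb0_inj).
Qed.

End BayesNet.

Lemma ler_norm_sqr (R : realDomainType) (t y : R) :
  0 <= t -> (t <= `|y|) = (t ^+ 2 <= y ^+ 2).
Proof. by move=> t_ge0; rewrite -(real_normK (num_real y)) ler_sqr ?nnegrE. Qed.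

Lemma card_ge_mulr_le_sum (R : numDomainType) (I : finType) (w : I -> R) (t : R) :
  (forall i, 0 <= w i) -> #|[set i | t <= w i]|%:R * t <= \sum_i w i.
Proof.
move=> w_ge0; rewrite mulr_natl -sumr_const [X in _ <= X](bigID [in [set i | t <= w i]]) /=.
rewrite -[X in X <= _]addr0 lerD ?sumr_ge0 //; first by apply: ler_sum => i; rewrite inE.
Qed.

Lemma sum_inj_le_sum (R : numDomainType) (I J : finType) (h : I -> J) (F : J -> R) :
  injective h -> (forall j, 0 <= F j) -> \sum_i F (h i) <= \sum_j F j.
Proof.
move=> h_inj F_ge0; rewrite (eq_bigl [in [set: I]]) => [|i]; last by rewrite inE.
rewrite -(big_imset _ (in2W h_inj)) [X in _ <= X](bigID [in h @: [set: I]]) /=.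
by rewrite lerDl sumr_ge0.
Qed.

Theorem mainTheorem3 (R : rcfType) (n : nat)
  (pa : 'I_n -> {set 'I_n}) (mu : 'I_n -> {ffun 'I_n -> bool} -> R)
  (f : {ffun 'I_n -> bool} -> R) (theta : R) (k : nat) :
  (forall v u : 'I_n, u \in pa v -> (u < v)%N) ->
  (forall (v : 'I_n) (x y : {ffun 'I_n -> bool}),
      (forall u, u \in pa v -> x u = y u) -> mu v x = mu v y) ->
  (forall v x, 0 < mu v x < 1) ->
  bn_exp mu (fun x => f x ^+ 2) <= 1 ->
  0 < theta ->
  (k <= n)%N ->
  [/\ (#|[set S : {set 'I_n} | theta <= `|fourier mu f S|]|%:R <= 1 / theta ^+ 2),
      (forall a : {ffun 'I_k -> bool},
          galpha_sqnorm R n k mu f a =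
          \sum_(b : {ffun 'I_(n - k) -> bool}) fourier mu f (setof (catb n k b a)) ^+ 2),
      (forall a : {ffun 'I_k -> bool},
          (exists b : {ffun 'I_(n - k) -> bool},
              theta <= `|fourier mu f (setof (catb n k b a))|) ->
          theta ^+ 2 <= galpha_sqnorm R n k mu f a)
    & (#|[set a : {ffun 'I_k -> bool} | theta ^+ 2 <= galpha_sqnorm R n k mu f a]|%:R
         <= 1 / theta ^+ 2)].
Proof.
move=> topo loc mu01 f2_le1 theta_gt0 le_kn.
have mu_causal (v : 'I_n) (x y : {ffun 'I_n -> bool}) :
    (forall u : 'I_n, (u < v)%N -> x u = y u) -> mu v x = mu v y.
  by move=> eq_xy; apply: loc => u /topo; apply: eq_xy.
have fourier_sqr_le1 : \sum_S fourier mu f S ^+ 2 <= 1.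
  apply: le_trans f2_le1.
  exact: bessel_inequality (bn_phiS_orthonormal mu_causal mu01) (bn_prob_ge0 mu01) f.
have sqnormE a := galpha_sqnormE mu_causal mu01 f a le_kn.
have theta2_gt0 : 0 < theta ^+ 2 by rewrite exprn_gt0.
have theta_sqr y : (theta <= `|y|) = (theta ^+ 2 <= y ^+ 2) := ler_norm_sqr y (ltW theta_gt0).
split => [|//|a [b theta_le]|]; rewrite ?ler_pdivlMr //.
- have -> : [set S | theta <= `|fourier mu f S|] = [set S | theta ^+ 2 <= fourier mu f S ^+ 2].
    by apply/setP => S; rewrite !inE theta_sqr.
  by apply: le_trans fourier_sqr_le1; apply: card_ge_mulr_le_sum => S; apply: sqr_ge0.
- rewrite theta_sqr in theta_le.
  rewrite sqnormE (bigD1 b) //= (le_trans theta_le) // lerDl.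
  by apply: sumr_ge0 => b' _; apply: sqr_ge0.
- apply: le_trans (card_ge_mulr_le_sum _ _) _ => [a|].
    by rewrite sqnormE; apply: sumr_ge0 => b _; apply: sqr_ge0.
  under eq_bigr => a _ do rewrite sqnormE.
  rewrite pair_bigA /=; apply: le_trans fourier_sqr_le1.
  apply: (sum_inj_le_sum (h := fun p => setof (catb n k p.2 p.1))) => [[a b] [a' b']|S].
    by move=> /setof_inj /(catb_inj le_kn) /= [-> ->].
  exact: sqr_ge0.
Qed.
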